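(* For every positive integer $n$, the average value of the Wiener index over $\overline{\mathcal{G}}_n$ is $$W_{avr}(\overline{\mathcal{G}}_n)=\frac{1}{|\overline{\mathcal{G}}_n|}\sum_{G\in\overline{\mathcal{G}}_n}W(G)=18n^3+18n^2-9n.$$
   Context: The Wiener index is $W(G)=\sum_{\{u,v\}\subseteq V(G)}d_G(u,v)$, $d_G$ the shortest-path distance. A polyphenyl hexagonal chain $\overline{G}_n=\overline{H}_0\cdots\overline{H}_{n-1}$ with $n$ hexagons consists of pairwise vertex-disjoint hexagons (6-cycles) $\overline{H}_0,\dots,\overline{H}_{n-1}$ together with cut-edges: $\overline{G}_1=\overline{H}_0$, and for $k\ge1$, $\overline{G}_{k+1}$ is obtained from $\overline{G}_k$ by adding $\overline{H}_k$ and a cut-edge joining a vertex $c_k$ of $\overline{H}_k$ to a vertex $t_k$ of $\overline{H}_{k-1}$, with $t_k\ne c_{k-1}$ for $k\ge2$. For $1\le i\le n-2$ label $\overline{H}_i$ by $O$, $M$ or $P$ according as the distance in $\overline{H}_i$ between $c_i$ and $t_{i+1}$ is $1$, $2$ or $3$; the word $x_1\cdots x_{n-2}$ over $\{O,M,P\}$ is the code of the chain (empty if $n\le2$). The code determines the chain up to isomorphism, and a code and its reverse describe the same chain. $\overline{\mathcal{G}}_n$ denotes the set of all polyphenyl hexagonal chains with $n$ hexagons, i.e. one chain for each class of codes of length $n-2$ under identification of a word with its reverse (so $|\overline{\mathcal{G}}_n|=\frac12(3^{n-2}+3^{\lfloor (n-1)/2\rfloor})$ for $n\ge2$). *)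

From mathcomp Require Import all_boot all_order all_algebra.
Set Implicit Arguments. Unset Strict Implicit. Unset Printing Implicit Defensive.

(* Graphs are symmetric relations on a finType; distances are shortest-path
   distances, computed as the least m such that v is reachable from u by a walk
   of length m (searched in 0 .. #|T|-1, which suffices for connected graphs). *)
Fixpoint reach (T : finType) (e : rel T) (m : nat) (u v : T) : bool :=
  match m with
  | 0 => u == v
  | m'.+1 => [exists w, e u w && reach e m' w v]
  end.

Definition gdist (T : finType) (e : rel T) (u v : T) : nat :=
  find (fun m => reach e m u v) (iota 0 #|T|).

Definition wiener (T : finType) (e : rel T) : nat :=
  \sum_(u : T) \sum_(v : T | enum_rank u < enum_rank v) gdist e u v.

Definition hexadj : rel 'I_6 :=
  fun a b => (val b == (val a).+1 %% 6) || (val a == (val b).+1 %% 6).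

(* A polyphenyl hexagonal chain with n hexagons H_0,...,H_{n-1} is given by
   vertex choices c k (a vertex of H_k) and t k (a vertex of H_{k-1}) for
   1 <= k <= n-1; the cut-edge joins (k, c k) and (k-1, t k). *)
Record chain := Chain { cv : nat -> 'I_6; tv : nat -> 'I_6 }.

Definition chain_adj (n : nat) (G : chain) : rel ('I_n * 'I_6) :=
  fun x y =>
    ((x.1 == y.1) && hexadj x.2 y.2)
    || [&& (val y.1 == (val x.1).+1), x.2 == tv G y.1 & y.2 == cv G y.1]
    || [&& (val x.1 == (val y.1).+1), y.2 == tv G x.1 & x.2 == cv G x.1].

Arguments chain_adj : clear implicits.

Definition chain_wf (n : nat) (G : chain) : Prop :=
  forall k, 2 <= k < n -> tv G k != cv G k.-1.

Definition chain_W (n : nat) (G : chain) : nat := wiener (chain_adj n G).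

(* Letters O, M, P are encoded as 0, 1, 2 in 'I_3: the letter of H_i is
   (distance in H_i between c_i and t_{i+1}) - 1. *)
Definition chain_code (n : nat) (G : chain) : (n - 2).-tuple 'I_3 :=
  [tuple (inord ((gdist hexadj (cv G i.+1) (tv G i.+2)).-1) : 'I_3) | i < n - 2].

Arguments chain_code : clear implicits.

Definition code_classes (n : nat) : {set {set (n - 2).-tuple 'I_3}} :=
  [set [set s; rev_tuple s] | s : (n - 2).-tuple 'I_3].

From mathcomp Require Import all_boot all_order all_algebra.
From mathcomp Require Import zify.
Set Implicit Arguments. Unset Strict Implicit. Unset Printing Implicit Defensive.

(* The distance between two vertices of a chain is explicit: inside a hexagon it
   is the cyclic distance, and between H_i and H_j (i < j) a geodesic crosses
   every H_m, i < m < j, from c_m to t_(m+1).  Summing over all pairs, H_m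
   contributes its crossing length, 2 + (letter of H_m), once for each of the
   m (n - 1 - m) pairs of hexagons it separates, so
     W = 27 n + 144 C(n,2) + 36 sum_i (x_i + 2) (i + 1) (n - 2 - i)
   for the code x_1 ... x_(n-2) with O, M, P read as 0, 1, 2.  This is invariant
   under reversal, and the involution O <-> P on codes, x_i |-> 2 - x_i, permutes
   the classes of codes; pairing each class with its image gives W + W' =
   2 (27 n + 144 C(n,2) + 108 C(n,3)), which is therefore the average. *)

Lemma find_iota_least (p : pred nat) N k :
  k < N -> p k -> (forall m, m < k -> ~~ p m) -> find p (iota 0 N) = k.
Proof.
move=> kN pk below; have -> : N = k + (N - k.+1).+1 by lia.
rewrite iotaD find_cat size_iota /= add0n pk addn0.
suff -> : has p (iota 0 k) = false by [].
by apply/hasPn => m; rewrite mem_iota => /andP[_]; apply: below.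
Qed.

Section GdistCharacterization.
Variables (T : finType) (e : rel T) (D : T -> T -> nat).
Hypothesis D_eq0 : forall u v, D u v = 0 -> u = v.
Hypothesis Dxx : forall u, D u u = 0.
Hypothesis D_edge : forall u w v, e u w -> D u v <= (D w v).+1.
Hypothesis D_descent : forall u v m, D u v = m.+1 -> exists2 w, e u w & D w v = m.
Hypothesis D_lt_card : forall u v, D u v < #|T|.

Lemma reach_le m u v : reach e m u v -> D u v <= m.
Proof.
elim: m u => [|m IH] u /=; first by move/eqP->; rewrite Dxx.
case/existsP=> w /andP[euw /IH Dw]; exact: leq_trans (D_edge v euw) _.
Qed.

Lemma reach_dist u v : reach e (D u v) u v.
Proof.
move Duv: (D u v) => m; elim: m u Duv => [|m IH] u /=; first by move/D_eq0->.
by case/D_descent=> w euw /IH reach_w; apply/existsP; exists w; rewrite euw.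
Qed.

Lemma gdist_eq : gdist e =2 D.
Proof.
move=> u v; apply: find_iota_least => [||m]; [exact: D_lt_card | exact: reach_dist |].
by move=> ltm; apply/negP=> /reach_le; rewrite leqNgt ltm.
Qed.

End GdistCharacterization.

Definition hexdist (a b : 'I_6) : nat := let d := (a + 6 - b) %% 6 in minn d (6 - d).

Definition hex_vertices : seq 'I_6 :=
  [:: @Ordinal 6 0 isT; @Ordinal 6 1 isT; @Ordinal 6 2 isT;
      @Ordinal 6 3 isT; @Ordinal 6 4 isT; @Ordinal 6 5 isT].

(* [ord_enum 6] does not reduce (its membership proofs go through [idP]), so
   facts about a single hexagon are checked by evaluation over this list. *)
Lemma hex_verticesP (P : pred 'I_6) : all P hex_vertices -> forall a, P a.
Proof. by move/allP=> allP [[|[|[|[|[|[|//]]]]]] ?]; apply: allP. Qed.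

Lemma hexdistC a b : hexdist a b = hexdist b a.
Proof. by apply/eqP; move: b; apply: hex_verticesP; move: a; exact: hex_verticesP. Qed.

Lemma hexdist_eq0 a b : (hexdist a b == 0) = (a == b).
Proof. by apply: (elimT eqP); move: b; apply: hex_verticesP; move: a; exact: hex_verticesP. Qed.

Lemma hexdistxx a : hexdist a a = 0.
Proof. by apply/eqP; rewrite hexdist_eq0. Qed.

Lemma hexdist_gt0 a b : (0 < hexdist a b) = (a != b).
Proof. by rewrite lt0n hexdist_eq0. Qed.

Lemma hexdist_le3 a b : hexdist a b <= 3.
Proof. by move: b; apply: hex_verticesP; move: a; exact: hex_verticesP. Qed.

Lemma hexdist_adj a a' b : hexadj a a' -> hexdist a b <= (hexdist a' b).+1.
Proof.
apply/implyP; move: b; apply: hex_verticesP; move: a'; apply: hex_verticesP.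
by move: a; exact: hex_verticesP.
Qed.

Lemma hexdist_descent a b : 0 < hexdist a b ->
  exists2 a', hexadj a a' & hexdist a' b = (hexdist a b).-1.
Proof.
move=> ab; suff /hasP[a' _ /andP[aa' /eqP]] :
    has (fun a' => hexadj a a' && (hexdist a' b == (hexdist a b).-1)) hex_vertices.
  by exists a'.
by move: ab; apply/implyP; move: b; apply: hex_verticesP; move: a; exact: hex_verticesP.
Qed.

Lemma sum_hexdistl b : \sum_(a < 6) hexdist a b = 9.
Proof. by rewrite !big_ord_recl big_ord0; apply/eqP; move: b; exact: hex_verticesP. Qed.

Lemma sum_hexdistr a : \sum_(b < 6) hexdist a b = 9.
Proof. by rewrite -(sum_hexdistl a); apply: eq_bigr => b _; apply: hexdistC. Qed.

Lemma gdist_hexagon : gdist hexadj =2 hexdist.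
Proof.
apply: gdist_eq => [u v /eqP|u|u w v|u v m uvm|u v].
- by rewrite hexdist_eq0 => /eqP.
- exact: hexdistxx.
- exact: hexdist_adj.
- have [|w uw] := @hexdist_descent u v; first by rewrite uvm.
  by rewrite uvm; exists w.
- by rewrite card_ord; apply: leq_ltn_trans (hexdist_le3 u v) _.
Qed.

Section ChainDistance.
Variable G : chain.
Local Notation c := (cv G).
Local Notation t := (tv G).

Definition transit m := hexdist (c m) (t m.+1) + 1.

(* For i < j a geodesic from vertex a of H_i leaves H_i at t_(i+1), crosses each
   H_m (i < m < j) from c_m to t_(m+1), and enters H_j at c_j. *)
Definition chain_far i a j b :=
  hexdist a (t i.+1) + 1 + \sum_(i.+1 <= m < j) transit m + hexdist (c j) b.

Definition chain_dist i a j b :=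
  if i == j then hexdist a b else if i < j then chain_far i a j b else chain_far j b i a.

(* The vertex of H_i through which geodesics towards H_j leave (for i != j). *)
Definition chain_gate i j := if i < j then t i.+1 else c i.

Lemma chain_distC i a j b : chain_dist i a j b = chain_dist j b i a.
Proof. by rewrite /chain_dist; case: (ltngtP i j) => // _; apply: hexdistC. Qed.

Lemma chain_distxx i a : chain_dist i a i a = 0.
Proof. by rewrite /chain_dist eqxx hexdistxx. Qed.

Lemma chain_dist_gate i a j b : i != j ->
  chain_dist i a j b = hexdist a (chain_gate i j) + chain_dist i (chain_gate i j) j b.
Proof.
rewrite /chain_dist /chain_gate => /negbTE->.
by case: ltnP => _; rewrite /chain_far hexdistxx ?(hexdistC a); lia.
Qed.

Lemma chain_dist_right i j b : i < j ->
  chain_dist i (t i.+1) j b = (chain_dist i.+1 (c i.+1) j b).+1.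
Proof.
move=> ij; rewrite /chain_dist (ltn_eqF ij) ij /chain_far hexdistxx.
case: (ltngtP i.+1 j) => [lt_i1j|gt_i1j|<-]; last by rewrite big_geq.
- by rewrite (big_ltn lt_i1j) /transit; lia.
- lia.
Qed.

Lemma chain_dist_left i j b : j < i ->
  chain_dist i (c i) j b = (chain_dist i.-1 (t i) j b).+1.
Proof.
case: i => // i; rewrite ltnS => ji /=.
rewrite /chain_dist (gtn_eqF (ji : j < i.+1)) (leq_gtF (leqW ji)) /chain_far hexdistxx.
case: (ltngtP j i) => [lt_ji|gt_ji|->]; last by rewrite big_geq // hexdistC; lia.
- by rewrite big_nat_recr //= /transit; lia.
- lia.
Qed.

Lemma chain_dist_hexadj i a a' j b : hexadj a a' ->
  chain_dist i a j b <= (chain_dist i a' j b).+1.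
Proof.
move=> aa'; case: (eqVneq i j) => [<-|ij].
  by rewrite /chain_dist eqxx; apply: hexdist_adj.
rewrite (chain_dist_gate a _ ij) (chain_dist_gate a' _ ij).
by have := hexdist_adj (chain_gate i j) aa'; lia.
Qed.

Lemma chain_dist_eq0 i a j b : chain_dist i a j b = 0 -> i = j /\ a = b.
Proof.
rewrite /chain_dist; case: eqP => [-> /eqP|_]; first by rewrite hexdist_eq0 => /eqP.
by case: ifP; rewrite /chain_far; lia.
Qed.

Lemma chain_far_le i a j b : chain_far i a j b <= 4 * (j - i.+1) + 7.
Proof.
have transit_le m : transit m <= 4 by rewrite /transit; have := hexdist_le3 (c m) (t m.+1); lia.
have : \sum_(i.+1 <= m < j) transit m <= \sum_(i.+1 <= m < j) 4.
  by apply: leq_sum => m _; apply: transit_le.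
rewrite sum_nat_const_nat /chain_far.
by have := hexdist_le3 a (t i.+1); have := hexdist_le3 (c j) b; lia.
Qed.

Section Vertices.
Variable n : nat.
Implicit Types x y w : 'I_n * 'I_6.

Local Notation dist x y := (chain_dist x.1 x.2 y.1 y.2).

Lemma chain_adj_dist x w y : chain_adj n G x w -> dist x y <= (dist w y).+1.
Proof.
case: x w => [i a] [i' a'] /orP[/orP[/andP[/eqP/= -> aa']|]|].
- exact: chain_dist_hexadj.
- case/and3P=> /eqP/= -> /eqP-> /eqP->; case: (leqP i.+1 y.1) => iy.
    by rewrite chain_dist_right.
  by rewrite chain_dist_left /=; lia.
- case/and3P=> /eqP/= -> /eqP-> /eqP->; case: (leqP i'.+1 y.1) => iy.
    by rewrite chain_dist_right; lia.
  by rewrite chain_dist_left.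
Qed.

Lemma chain_dist_cross x y : x.1 != y.1 -> x.2 = chain_gate x.1 y.1 ->
  exists2 w, chain_adj n G x w & (dist w y).+1 = dist x y.
Proof.
case: x y => [i a] [j b] /= ij ->; rewrite /chain_gate; case: ltnP => [lt_ij|le_ji].
  have i1n : i.+1 < n := leq_ltn_trans lt_ij (ltn_ord j).
  exists (Ordinal i1n, c i.+1); first by rewrite /chain_adj /= !eqxx orbT.
  by rewrite chain_dist_right.
have lt_ji : j < i by rewrite ltn_neqAle eq_sym ij le_ji.
have i_gt0 : 0 < i := leq_ltn_trans (leq0n j) lt_ji.
have i1n : i.-1 < n by apply: leq_ltn_trans (leq_pred i) (ltn_ord i).
exists (Ordinal i1n, t i); first by rewrite /chain_adj /= (prednK i_gt0) !eqxx !orbT.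
by rewrite /= chain_dist_left.
Qed.

Lemma chain_dist_descent x y m : dist x y = m.+1 ->
  exists2 w, chain_adj n G x w & dist w y = m.
Proof.
case: x y => [i a] [j b] /= xym; case: (eqVneq i j) => [eq_ij|ij].
  move: xym; rewrite eq_ij /chain_dist eqxx => ab.
  have [|a' aa' a'b] := @hexdist_descent a b; first by rewrite ab.
  by exists (j, a'); rewrite /chain_adj /= ?eqxx ?aa' // a'b ab.
case: (eqVneq a (chain_gate i j)) => [gate_a|not_gate].
  have [w xw wy] := @chain_dist_cross (i, a) (j, b) ij gate_a.
  by exists w => //; move: wy; rewrite xym => -[].
have [|a' aa' a'g] := @hexdist_descent a (chain_gate i j); first by rewrite hexdist_gt0.
exists (i, a'); first by rewrite /chain_adj /= eqxx aa'.
move: xym; rewrite /= (chain_dist_gate a _ ij) (chain_dist_gate a' _ ij) a'g.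
have : 0 < hexdist a (chain_gate i j) by rewrite hexdist_gt0.
by case: (hexdist a _) => // k _; rewrite addSn => -[].
Qed.

Lemma chain_dist_lt_card x y : dist x y < #|{: 'I_n * 'I_6}|.
Proof.
rewrite card_prod !card_ord; case: x y => [i a] [j b].
move: (ltn_ord i) (ltn_ord j); rewrite /chain_dist /=.
case: eqP => [_|ij]; first by have := hexdist_le3 a b; lia.
case: (ltnP i j) => [lt_ij|le_ji].
  by have := chain_far_le i a j b; lia.
by have := chain_far_le j b i a; lia.
Qed.

Lemma gdist_chain : gdist (chain_adj n G) =2 (fun x y => dist x y).
Proof.
apply: gdist_eq.
- by case=> [i a] [j b] /chain_dist_eq0 /= [/val_inj-> ->].
- by move=> x; apply: chain_distxx.
- exact: chain_adj_dist.
- exact: chain_dist_descent.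
- exact: chain_dist_lt_card.
Qed.

End Vertices.
End ChainDistance.

Lemma sum_sym_rank (T : finType) (r : T -> nat) (D : T -> T -> nat) :
  injective r -> (forall u v, D u v = D v u) ->
  \sum_u \sum_v D u v = \sum_u D u u + 2 * \sum_u \sum_(v | r u < r v) D u v.
Proof.
move=> r_inj DC.
have split_row u : \sum_v D u v =
    D u u + \sum_(v | r u < r v) D u v + \sum_(v | r v < r u) D u v.
  rewrite (bigD1 u) //= (bigID (fun v => r u < r v)) /= addnA.
  by congr (_ + _ + _); apply: eq_bigl => v; rewrite -(inj_eq r_inj); case: ltngtP.
rewrite (eq_bigr _ (fun u _ => split_row u)) !big_split /= -addnA mul2n -addnn.
congr (_ + (_ + _)); rewrite (eq_bigr _ (fun u _ => big_mkcond _ _)) exchange_big /=.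
by apply: eq_bigr => u _; rewrite [RHS]big_mkcond; apply: eq_bigr => v _; rewrite DC.
Qed.

Lemma sum_ord_lt n (F : nat -> nat -> nat) :
  \sum_(i < n) \sum_(j < n | i < j) F i j = \sum_(0 <= i < n) \sum_(i.+1 <= j < n) F i j.
Proof. by rewrite big_mkord; apply: eq_bigr => i _; rewrite big_geq_mkord. Qed.

Lemma sum_lt_pairs n (g : nat -> nat) :
  \sum_(0 <= i < n) \sum_(i.+1 <= m < n) g m = \sum_(0 <= m < n) g m * m.
Proof.
elim: n => [|n IH]; first by rewrite !big_geq.
rewrite big_nat_recr //= [X in _ + X]big_geq // addn0.
under eq_big_nat => i /andP[_ lt_in] do rewrite big_nat_recr //.
by rewrite big_split /= IH sum_nat_const_nat subn0 big_nat_recr //= mulnC.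
Qed.

(* The weight m * (n.-1 - m) counts the pairs i < m < j < n. *)
Lemma sum_between n (g : nat -> nat) :
  \sum_(0 <= i < n) \sum_(i.+1 <= j < n) \sum_(i.+1 <= m < j) g m =
  \sum_(0 <= m < n) g m * (m * (n.-1 - m)).
Proof.
elim: n => [|n IH]; first by rewrite !big_geq.
rewrite big_nat_recr //= [X in _ + X]big_geq // addn0.
under eq_big_nat => i /andP[_ lt_in] do rewrite big_nat_recr //.
rewrite big_split /= IH sum_lt_pairs big_nat_recr //= subnn !muln0 addn0 -big_split /=.
apply: eq_big_nat => m /andP[_ lt_mn]; rewrite -mulnDr -mulnSr; congr (_ * (_ * _)).
by case: n lt_mn {IH} => // n lt_mn /=; lia.
Qed.

Lemma sum_interior n (g : nat -> nat) :
  \sum_(0 <= m < n) g m * (m * (n.-1 - m)) = \sum_(i < n - 2) g i.+1 * (i.+1 * (n - 2 - i)).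
Proof.
case: n => [|[|k]]; first by rewrite big_geq // big_ord0.
  by rewrite big_nat1 big_ord0 !muln0.
rewrite big_nat_recl // mul0n muln0 add0n big_nat_recr //= subnn !muln0 addn0.
have -> : k.+2 - 2 = k by lia.
by rewrite big_mkord; apply: eq_bigr => i _; rewrite subSS.
Qed.

Section ChainWiener.
Variables (n : nat) (G : chain).

Definition block_sum i j := \sum_(a < 6) \sum_(b < 6) chain_dist G i a j b.

Lemma block_sumC i j : block_sum i j = block_sum j i.
Proof.
rewrite /block_sum exchange_big; apply: eq_bigr => a _; apply: eq_bigr => b _.
exact: chain_distC.
Qed.

Lemma block_sum_diag i : block_sum i i = 54.
Proof.
rewrite /block_sum /chain_dist eqxx (eq_bigr (fun _ => 9)) => [|a _].
  by rewrite sum_nat_const card_ord.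
exact: sum_hexdistr.
Qed.

Lemma block_sum_lt i j : i < j ->
  block_sum i j = 144 + 36 * \sum_(i.+1 <= m < j) transit G m.
Proof.
move=> ij; rewrite /block_sum /chain_dist (ltn_eqF ij) ij /chain_far.
set S := \sum_(_ <= _ < _) _.
rewrite (eq_bigr (fun a => 6 * hexdist a (tv G i.+1) + (6 + 6 * S + 9))) => [|a _].
  by rewrite big_split /= -big_distrr /= sum_hexdistl sum_nat_const card_ord; lia.
by rewrite big_split /= sum_hexdistr sum_nat_const card_ord; lia.
Qed.

Lemma chain_W_blocks :
  2 * chain_W n G = 54 * n + 2 * \sum_(0 <= i < n) \sum_(i.+1 <= j < n) block_sum i j.
Proof.
have rank_inj : injective (fun x : 'I_n * 'I_6 => nat_of_ord (enum_rank x)).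
  by move=> x y /val_inj/enum_rank_inj.
have sum_pair (F : 'I_n * 'I_6 -> nat) : \sum_x F x = \sum_i \sum_a F (i, a).
  by rewrite pair_big; apply: eq_bigr => -[].
have -> : 2 * chain_W n G =
    \sum_(x : 'I_n * 'I_6) \sum_(y : 'I_n * 'I_6) chain_dist G x.1 x.2 y.1 y.2.
  rewrite (sum_sym_rank rank_inj) => [|x y]; last exact: chain_distC.
  rewrite big1 ?add0n => [|x _]; last exact: chain_distxx.
  by congr (2 * _); apply: eq_bigr => x _; apply: eq_bigr => y _; rewrite gdist_chain.
rewrite sum_pair (eq_bigr _ (fun i _ => eq_bigr _ (fun a _ => sum_pair _))).
under eq_bigr => i _ do rewrite exchange_big /=.
rewrite (sum_sym_rank (@ord_inj n) (D := fun i j : 'I_n => block_sum i j)) => [|i j].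
  2: exact: block_sumC.
under eq_bigr => i _ do rewrite block_sum_diag.
by rewrite sum_nat_const card_ord mulnC sum_ord_lt.
Qed.

Lemma chain_W_transit : chain_W n G =
  27 * n + 144 * 'C(n, 2) + 36 * \sum_(0 <= m < n) transit G m * (m * (n.-1 - m)).
Proof.
apply/eqP; rewrite -(eqn_pmul2l (isT : 0 < 2)) chain_W_blocks.
rewrite -sum_between -bin2_sum -(eq_bigr _ (fun m _ => mul1n m)) -sum_lt_pairs.
have -> : \sum_(0 <= i < n) \sum_(i.+1 <= j < n) block_sum i j =
    \sum_(0 <= i < n) \sum_(i.+1 <= j < n) (144 * 1 + 36 * \sum_(i.+1 <= m < j) transit G m).
  by apply: eq_big_nat => i _; apply: eq_big_nat => j /andP[ij _]; apply: block_sum_lt.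
under eq_bigr => i _ do rewrite big_split /= -!big_distrr /=.
by rewrite big_split /= -!big_distrr /=; apply/eqP; lia.
Qed.

End ChainWiener.

Definition code_weight k (s : k.-tuple 'I_3) :=
  \sum_(i < k) (tnth s i + 2) * (i.+1 * (k - i)).

Lemma transit_code n G (i : 'I_(n - 2)) : chain_wf n G ->
  transit G i.+1 = tnth (chain_code n G) i + 2.
Proof.
move=> wf; have lt_in := ltn_ord i.
have ct : cv G i.+1 != tv G i.+2 by rewrite eq_sym; apply: wf; lia.
rewrite tnth_mktuple gdist_hexagon inordK /transit; last first.
  by have := hexdist_le3 (cv G i.+1) (tv G i.+2); lia.
by move: ct; rewrite -hexdist_gt0; lia.
Qed.

(* The weight vanishes on the end hexagons, whose c_0 and t_n are meaningless. *)
Lemma chain_W_code n G : chain_wf n G ->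
  chain_W n G = 27 * n + 144 * 'C(n, 2) + 36 * code_weight (chain_code n G).
Proof.
move=> wf; rewrite chain_W_transit sum_interior; congr (_ + 36 * _).
by apply: eq_bigr => i _; rewrite transit_code.
Qed.

(* [rev_ord] on 'I_3 exchanges the letters O and P and fixes M. *)
Definition code_compl k (s : k.-tuple 'I_3) : k.-tuple 'I_3 := [tuple of map (@rev_ord 3) s].

Lemma code_complK k : involutive (@code_compl k).
Proof. by move=> s; apply: val_inj; rewrite /= -map_comp (eq_map (@rev_ordK 3)) map_id. Qed.

Lemma code_compl_rev k (s : k.-tuple 'I_3) :
  code_compl (rev_tuple s) = rev_tuple (code_compl s).
Proof. by apply: val_inj; rewrite /= map_rev. Qed.

Lemma code_weight_rev k (s : k.-tuple 'I_3) : code_weight (rev_tuple s) = code_weight s.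
Proof.
rewrite /code_weight (reindex_inj rev_ord_inj); apply: eq_bigr => i _ /=.
have lt_ik := ltn_ord i.
have -> : tnth (rev_tuple s) (rev_ord i) = tnth s i.
  rewrite !(tnth_nth ord0) /= nth_rev ?size_tuple; last by lia.
  by congr nth; lia.
by congr (_ * _); rewrite mulnC; congr (_ * _); lia.
Qed.

Lemma sum_tetrahedral k : \sum_(i < k) i.+1 * (k - i) = 'C(k.+2, 3).
Proof.
elim: k => [|k IH]; first by rewrite big_ord0.
have triangular : \sum_(i < k.+1) i.+1 = 'C(k.+2, 2).
  by rewrite -bin2_sum big_nat_recl // big_mkord.
rewrite binS -IH -triangular !big_ord_recr /= subSnn muln1 addnA -big_split /=.
by congr (_ + _); apply: eq_bigr => i _; rewrite subSn ?mulnS 1?addnC // ltnW.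
Qed.

Lemma code_weight_compl k (s : k.-tuple 'I_3) :
  code_weight (code_compl s) + code_weight s = 6 * 'C(k.+2, 3).
Proof.
rewrite /code_weight -big_split -sum_tetrahedral big_distrr; apply: eq_bigr => i _ /=.
rewrite tnth_map -mulnDl; congr (_ * _); have := ltn_ord (tnth s i); rewrite /=; lia.
Qed.

Lemma sum_involution_pairs (T : finType) (A : {pred T}) (s : T -> T) (f : T -> nat) c :
  involutive s -> {homo s : x / x \in A} -> {in A, forall x, f x + f (s x) = 2 * c} ->
  \sum_(x in A) f x = #|A| * c.
Proof.
move=> sK sA f_pair.
have sum_s : \sum_(x in A) f (s x) = \sum_(x in A) f x.
  rewrite [RHS](reindex_inj (inv_inj sK)); apply: eq_bigl => x.
  by apply/idP/idP => [|/sA]; [apply: sA | rewrite sK].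
apply/eqP; rewrite -(eqn_pmul2l (isT : 0 < 2)) mulnCA -sum_nat_const.
by rewrite mul2n -addnn -{2}sum_s -big_split; apply/eqP/eq_bigr => x /f_pair.
Qed.

Definition class_compl k (C : {set k.-tuple 'I_3}) := @code_compl k @: C.

Lemma class_complK k : involutive (@class_compl k).
Proof.
by move=> C; rewrite /class_compl -imset_comp (eq_imset _ (@code_complK k)) imset_id.
Qed.

Lemma class_compl_pair k (s : k.-tuple 'I_3) :
  class_compl [set s; rev_tuple s] = [set code_compl s; rev_tuple (code_compl s)].
Proof. by rewrite /class_compl imsetU1 imset_set1 code_compl_rev. Qed.

Lemma class_compl_code_classes n :
  {homo @class_compl (n - 2) : C / C \in code_classes n}.
Proof. by move=> _ /imsetP[s _ ->]; rewrite class_compl_pair; apply: imset_f. Qed.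

Lemma wiener_average_closed n :
  27 * n + 144 * 'C(n, 2) + 108 * 'C((n - 2).+2, 3) + 9 * n = 18 * n ^ 3 + 18 * n ^ 2.
Proof.
case: n => [|[|k]] //; rewrite (_ : k.+2 - 2 = k); last by lia.
have := bin_ffact k.+2 2; have := bin_ffact k.+2 3.
rewrite !ffactnS !ffactn0 (_ : 3`! = 6) // (_ : 2`! = 2) //; nia.
Qed.

Import GRing.Theory Num.Theory.

Theorem theorem5p3 (n : nat) (hn : 1 <= n)
    (rep : {set (n - 2).-tuple 'I_3} -> chain)
    (hwf : forall C, C \in code_classes n -> chain_wf n (rep C))
    (hcode : forall C, C \in code_classes n -> chain_code n (rep C) \in C) :
  ((\sum_(C in code_classes n) chain_W n (rep C))%:R / (#|code_classes n|)%:R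
     : rat)%R
  = (18 * (n ^ 3)%:R + 18 * (n ^ 2)%:R - 9 * n%:R)%R.
Proof.
(* The formula also holds for n = 0. *)
have class_in s : [set s; rev_tuple s] \in code_classes n by apply/imsetP; exists s.
have W_class s : chain_W n (rep [set s; rev_tuple s]) =
    27 * n + 144 * 'C(n, 2) + 36 * code_weight s.
  rewrite chain_W_code; last exact/hwf/class_in.
  by case/set2P: (hcode _ (class_in s)) => ->; rewrite ?code_weight_rev.
have sum_W : \sum_(C in code_classes n) chain_W n (rep C) =
    #|code_classes n| * (27 * n + 144 * 'C(n, 2) + 108 * 'C((n - 2).+2, 3)).
  apply: (sum_involution_pairs (@class_complK _) (@class_compl_code_classes n)).
  move=> _ /imsetP[s _ ->]; rewrite class_compl_pair !W_class.
  by have := code_weight_compl s; lia.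
have classes_gt0 : 0 < #|code_classes n|.
  by apply/card_gt0P; eexists; apply: (class_in [tuple ord0 | _ < n - 2]).
rewrite sum_W natrM mulrAC divff ?mul1r ?pnatr_eq0 -?lt0n //.
have le_9n : 9 * n <= 18 * n ^ 3 + 18 * n ^ 2 by rewrite -wiener_average_closed leq_addl.
have -> : 27 * n + 144 * 'C(n, 2) + 108 * 'C((n - 2).+2, 3) = 18 * n ^ 3 + 18 * n ^ 2 - 9 * n.
  by rewrite -wiener_average_closed addnK.
by rewrite natrB // natrD (natrM _ 18) (natrM _ 18) (natrM _ 9).
Qed.
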